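(* Let $m,n\ge 5$ be integers and let $C_m\Box C_n$ be the torus grid graph. Then its disjunctive domination number satisfies $$\frac{mn}{9}\le \gamma_2^d(C_m\Box C_n)\le 2\left\lceil \frac{m}{4}\right\rceil\cdot\left\lceil \frac{n}{4}\right\rceil.$$
   Context: $C_k$ denotes the cycle on $k$ vertices, and $G\Box H$ is the Cartesian product: vertex set $V(G)\times V(H)$, with $(g,h)\sim(g',h')$ iff either $g=g'$ and $hh'\in E(H)$, or $h=h'$ and $gg'\in E(G)$. For a simple graph $\Gamma$ and a vertex $v$, let $\Gamma(v)$ be the set of vertices at distance $1$ from $v$ and $\Gamma_2(v)$ the set of vertices at distance exactly $2$ from $v$. A set $S\subseteq V(\Gamma)$ is a disjunctive dominating set if every vertex $v\notin S$ satisfies $|\Gamma(v)\cap S|\ge 1$ or $|\Gamma_2(v)\cap S|\ge 2$. The disjunctive domination number $\gamma_2^d(\Gamma)$ is the minimum cardinality of a disjunctive dominating set of $\Gamma$. *)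

From mathcomp Require Import all_boot.
Set Implicit Arguments. Unset Strict Implicit. Unset Printing Implicit Defensive.

(* A simple graph is a symmetric irreflexive relation [adj] on a finite type. *)
Section Disj.
Variables (T : finType) (adj : rel T).

Definition nbhd1 (v : T) : {set T} := [set u | adj v u].

Definition nbhd2 (v : T) : {set T} :=
  [set u | [&& u != v, ~~ adj v u & [exists w, adj v w && adj w u]]].

Definition disjunctive_dominating (S : {set T}) : bool :=
  [forall v, (v \notin S) ==>
     ((1 <= #|nbhd1 v :&: S|) || (2 <= #|nbhd2 v :&: S|))].

(* Minimum cardinality of a disjunctive dominating set
   (the whole vertex set is always one, so #|T| is a valid default). *)
Definition gamma2d : nat :=
  \big[minn/#|T|]_(S : {set T} | disjunctive_dominating S) #|S|.
End Disj.

Definition cycle_adj (k : nat) : rel 'I_k :=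
  fun i j => (j == (i.+1 %% k) :> nat) || (i == (j.+1 %% k) :> nat).

Definition cart_adj (A B : finType) (ea : rel A) (eb : rel B) : rel (A * B) :=
  fun x y => ((x.1 == y.1) && eb x.2 y.2) || ((x.2 == y.2) && ea x.1 y.1).

Definition torus_adj (m n : nat) : rel ('I_m * 'I_n) :=
  cart_adj (@cycle_adj m) (@cycle_adj n).
Arguments torus_adj m n : clear implicits.
Arguments gamma2d T adj : clear implicits.

Definition ceil_div (m d : nat) : nat := (m + d.-1) %/ d.

From mathcomp Require Import all_boot zmodp zify.
Set Implicit Arguments. Unset Strict Implicit. Unset Printing Implicit Defensive.

(* Lower bound: every vertex of C_m □ C_n has at most 4 neighbours and at most
   8 vertices at distance 2.  A disjunctive dominating set S gives every vertex v
   the weight 2[v ∈ S] + 2|Γ(v) ∩ S| + |Γ_2(v) ∩ S| ≥ 2, and double counting over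
   the mn vertices gives 2mn ≤ 18|S|.

   Upper bound: take the vertices whose coordinates are both 0 or both 2 mod 4,
   the last index of a cycle of length 2 mod 4 counting as 2 mod 4; there are at
   most 2⌈m/4⌉⌈n/4⌉ of them.  Whether this set dominates (x, y) can be read off
   the memberships of the five vertices at distance ≤ 2 from x in C_m and from y
   in C_n.  This window of i in C_k depends only on i mod 4, k mod 4 and the
   distance from i to the wrap-around point, so every window of C_k already
   occurs in C_(12 + k mod 4), and a finite computation on the sixteen tori with
   sides in 12..15 completes the proof. *)

Section DisjunctiveDomination.
Variables (T : finType) (adj : rel T).

Lemma gamma2d_le S : disjunctive_dominating adj S -> gamma2d T adj <= #|S|.
Proof.
move=> domS; rewrite /gamma2d -big_filter.
have : S \in [seq S <- index_enum _ | disjunctive_dominating adj S].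
  by rewrite mem_filter domS mem_index_enum.
elim: (filter _ _) => //= S' r IH; rewrite big_cons inE => /predU1P [<-|/IH].
  exact: geq_minl.
exact/leq_trans/geq_minr.
Qed.

Lemma sum_card_setI_le (N : T -> {set T}) (S : {set T}) c :
    (forall u v, (u \in N v) = (v \in N u)) -> (forall u, #|N u| <= c) ->
  \sum_v #|N v :&: S| <= c * #|S|.
Proof.
move=> N_sym N_le.
have cardE v : #|N v :&: S| = \sum_(u in S) (u \in N v).
  by rewrite -sum1_card big_mkcond [RHS]big_mkcond /=; apply: eq_bigr => u _;
     rewrite inE andbC; case: (u \in S); case: (u \in N v).
rewrite (eq_bigr _ (fun v _ => cardE v)) exchange_big mulnC -sum_nat_const.
apply: leq_sum => u _; under eq_bigr do rewrite N_sym.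
by rewrite -big_mkcond sum1_card.
Qed.

Hypothesis adj_sym : symmetric adj.

Lemma nbhd1_sym u v : (u \in nbhd1 adj v) = (v \in nbhd1 adj u).
Proof. by rewrite !inE adj_sym. Qed.

Lemma nbhd2_sym u v : (u \in nbhd2 adj v) = (v \in nbhd2 adj u).
Proof.
rewrite !inE eq_sym adj_sym; congr [&& _, _ & _].
by apply/existsP/existsP => -[w /andP [vw wu]]; exists w; rewrite adj_sym andbC adj_sym vw.
Qed.

Variables d1 d2 : nat.
Hypotheses (card_nbhd1 : forall v, #|nbhd1 adj v| <= d1)
           (card_nbhd2 : forall v, #|nbhd2 adj v| <= d2).

Lemma disjunctive_dominating_card S :
  disjunctive_dominating adj S -> 2 * #|T| <= (d1.*2 + d2 + 2) * #|S|.
Proof.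
move=> /forallP domS.
pose w v := (v \in S) + (v \in S) + #|nbhd1 adj v :&: S| + #|nbhd1 adj v :&: S| + #|nbhd2 adj v :&: S|.
have : \sum_(v : T) 2 <= \sum_v w v.
  apply: leq_sum => v _; rewrite /w; case: (boolP (v \in S)) => vS //.
  by move: (domS v); rewrite vS => /orP[]; lia.
have cardS : \sum_v (v \in S : nat) = #|S| by rewrite -sum1_card [RHS]big_mkcond.
rewrite sum_nat_const (_ : #|xpredT| = #|T|) // !big_split cardS /=.
have := sum_card_setI_le S nbhd1_sym card_nbhd1.
have := sum_card_setI_le S nbhd2_sym card_nbhd2.
lia.
Qed.

Lemma gamma2d_ge : 2 * #|T| <= (d1.*2 + d2 + 2) * gamma2d T adj.
Proof.
apply: (big_ind (fun g => 2 * #|T| <= (d1.*2 + d2 + 2) * g)) => [|g g' ? ?|].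
- by rewrite leq_mul2r; apply/orP; right; lia.
- by case: (leqP g g').
- exact: disjunctive_dominating_card.
Qed.

End DisjunctiveDomination.

Section CartesianProduct.
Variables (A B : finType) (ea : rel A) (eb : rel B).
Local Notation e := (cart_adj ea eb).

Lemma cart_adj_sym : symmetric ea -> symmetric eb -> symmetric e.
Proof. by move=> ea_sym eb_sym x y; rewrite /cart_adj ea_sym eb_sym !(eq_sym x.1) (eq_sym x.2). Qed.

Lemma nbhd1_cart x y :
  nbhd1 e (x, y) = setX (nbhd1 ea x) [set y] :|: setX [set x] (nbhd1 eb y).
Proof.
apply/setP => -[u v]; rewrite !inE /cart_adj /= orbC.
by rewrite (eq_sym u) (eq_sym v) andbC [_ && eb _ _]andbC.
Qed.

Lemma nbhd2_cart_sub x y :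
  nbhd2 e (x, y) \subset
  setX (nbhd2 ea x) [set y] :|: setX [set x] (nbhd2 eb y) :|: setX (nbhd1 ea x) (nbhd1 eb y).
Proof.
apply/subsetP => -[u v]; rewrite !inE /cart_adj /= xpair_eqE.
case/and3P => uv_ne uv_nadj /existsP [[w1 w2]] /=.
case/andP => /orP [] /andP [/eqP xw xw_adj]; [subst w1 | subst w2];
  case/orP => /andP [/eqP wu wu_adj]; subst u || subst v;
  rewrite ?xw_adj ?wu_adj ?orbT //; move: uv_ne uv_nadj; rewrite !eqxx negb_or /= ?andbT.
- move=> v_ne /andP [v_nadj _]; rewrite v_ne v_nadj /=.
  suff -> : [exists w, eb y w && eb w v] by [].
  by apply/existsP; exists w2; rewrite xw_adj.
- move=> u_ne /andP [_ u_nadj]; rewrite u_ne u_nadj /=.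
  suff -> : [exists w, ea x w && ea w u] by [].
  by apply/existsP; exists w1; rewrite xw_adj.
Qed.

Lemma card_nbhd1_cart x y : #|nbhd1 e (x, y)| <= #|nbhd1 ea x| + #|nbhd1 eb y|.
Proof. by rewrite nbhd1_cart (leq_trans (leq_card_setU _ _)) // !cardsX !cards1 muln1 mul1n. Qed.

Lemma card_nbhd2_cart x y :
  #|nbhd2 e (x, y)| <= #|nbhd2 ea x| + #|nbhd2 eb y| + #|nbhd1 ea x| * #|nbhd1 eb y|.
Proof.
apply: leq_trans (subset_leq_card (nbhd2_cart_sub x y)) _.
apply: leq_trans (leq_card_setU _ _) _; rewrite cardsX leq_add2r.
by apply: leq_trans (leq_card_setU _ _) _; rewrite !cardsX !cards1 muln1 mul1n.
Qed.

Lemma nbhd2_cart_l x x' y : x' \in nbhd2 ea x -> (x', y) \in nbhd2 e (x, y).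
Proof.
rewrite !inE /cart_adj /= xpair_eqE eqxx andbT => /and3P [x'_ne nadj /existsP [w /andP [xw wx']]].
rewrite x'_ne (eq_sym x) (negbTE x'_ne) (negbTE nadj) /=.
by apply/existsP; exists (w, y); rewrite /= xw wx' eqxx !orbT.
Qed.

Lemma nbhd2_cart_r x y y' : y' \in nbhd2 eb y -> (x, y') \in nbhd2 e (x, y).
Proof.
rewrite !inE /cart_adj /= xpair_eqE eqxx => /and3P [y'_ne nadj /existsP [w /andP [yw wy']]].
rewrite y'_ne (eq_sym y) (negbTE y'_ne) (negbTE nadj) /=.
by apply/existsP; exists (x, w); rewrite /= yw wy' eqxx.
Qed.

Lemma nbhd2_cart_diag x x' y y' :
  x' != x -> y' != y -> ea x x' -> eb y y' -> (x', y') \in nbhd2 e (x, y).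
Proof.
move=> x'_ne y'_ne xx' yy'; rewrite !inE /cart_adj /= xpair_eqE.
rewrite (eq_sym x) (eq_sym y) (negbTE x'_ne) (negbTE y'_ne) /=.
by apply/existsP; exists (x', y); rewrite /= xx' yy' !eqxx !orbT.
Qed.
End CartesianProduct.

(* Splits on an innermost [if a == b], so that only linear arithmetic remains. *)
Ltac case_nat_ifs := repeat match goal with
  | |- context [if ?a == ?b then _ else _] =>
      lazymatch a with context [if _ then _ else _] => fail | _ => case: (a =P b) => ? /= end
  end.

Section Cycle.
Variable k : nat.
Implicit Types i j : 'I_k.
Local Notation adj := (@cycle_adj k).

Lemma cycle_adjE i j : adj i j = (j == ordS i) || (j == ord_pred i).
Proof.
have -> : (j == ord_pred i) = (i == ordS j).
  by apply/eqP/eqP => ->; rewrite ?ordSK ?ord_predK.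
by [].
Qed.

Lemma cycle_adj_sym : symmetric adj.
Proof. by move=> i j; rewrite /cycle_adj orbC. Qed.

Lemma nbhd1_cycle i : nbhd1 adj i = [set ordS i; ord_pred i].
Proof. by apply/setP => j; rewrite !inE cycle_adjE. Qed.

Lemma nbhd2_cycle_sub i : nbhd2 adj i \subset [set ordS (ordS i); ord_pred (ord_pred i)].
Proof.
apply/subsetP => j; rewrite !inE => /and3P [j_ne _ /existsP [w]].
rewrite !cycle_adjE => /andP [/orP [] /eqP -> /orP [] /eqP j_eq]; subst j;
  rewrite ?eqxx ?orbT //; by rewrite ?ordSK ?ord_predK eqxx in j_ne.
Qed.

Lemma card_nbhd1_cycle i : #|nbhd1 adj i| <= 2.
Proof. by rewrite nbhd1_cycle cards2; case: (_ != _). Qed.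

Lemma card_nbhd2_cycle i : #|nbhd2 adj i| <= 2.
Proof. by rewrite (leq_trans (subset_leq_card (nbhd2_cycle_sub i))) // cards2; case: (_ != _). Qed.

Lemma val_ordS i : ordS i = (if i == k.-1 :> nat then 0 else i.+1) :> nat.
Proof.
have := ltn_ord i; rewrite /=; case: eqP => [-> lt|ne lt]; last by rewrite modn_small; lia.
by rewrite prednK ?modnn //; lia.
Qed.

Lemma val_ord_pred i : ord_pred i = (if i == 0 :> nat then k.-1 else i.-1) :> nat.
Proof.
have := ltn_ord i; rewrite /=; case: eqP => [-> lt|ne lt]; first by rewrite modn_small; lia.
by rewrite -subn1 -addnBAC ?modnDr ?modn_small; lia.
Qed.

Lemma val_ordS2 i : ordS (ordS i) =
  (if i == k.-2 :> nat then 0 else if i == k.-1 :> nat then 1 else i.+2) :> nat.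
Proof. by have := ltn_ord i; rewrite !val_ordS; case_nat_ifs; lia. Qed.

Lemma val_ord_pred2 i : ord_pred (ord_pred i) =
  (if i == 0 :> nat then k.-2 else if i == 1 :> nat then k.-1 else i.-2) :> nat.
Proof. by have := ltn_ord i; rewrite !val_ord_pred; case_nat_ifs; lia. Qed.

Lemma ordS_neq i : 1 < k -> ordS i != i.
Proof. by move=> k_gt1; rewrite -(inj_eq (@ord_inj k)) val_ordS; case_nat_ifs; lia. Qed.

Lemma ord_pred_neq i : 1 < k -> ord_pred i != i.
Proof. by move=> k_gt1; rewrite -(inj_eq (@ord_inj k)) val_ord_pred; case_nat_ifs; lia. Qed.

Definition ball2 i := [:: i; ordS i; ord_pred i; ordS (ordS i); ord_pred (ord_pred i)].

Lemma uniq_ball2 i : 5 <= k -> uniq (ball2 i).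
Proof.
move=> k_ge5; have := ltn_ord i; rewrite /ball2 /= !inE -!(inj_eq (@ord_inj k)).
by rewrite val_ordS2 val_ord_pred2 val_ordS val_ord_pred; case_nat_ifs; lia.
Qed.

Lemma nbhd2_cycle i : 5 <= k -> nbhd2 adj i = [set ordS (ordS i); ord_pred (ord_pred i)].
Proof.
move=> k_ge5; apply/eqP; rewrite eqEsubset nbhd2_cycle_sub subUset !sub1set !inE !cycle_adjE.
have := uniq_ball2 i k_ge5; rewrite /ball2 /= !inE !negb_or.
case/and5P => /and4P [_ _ i_SS i_PP] /and3P [_ S_SS S_PP] /andP [P_SS P_PP] SS_PP _.
rewrite !(eq_sym _ i) !(eq_sym _ (ordS i)) !(eq_sym _ (ord_pred i)) i_SS i_PP S_SS S_PP P_SS P_PP /=.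
apply/andP; split; apply/existsP; [exists (ordS i) | exists (ord_pred i)];
  by rewrite !cycle_adjE !eqxx ?orbT.
Qed.
End Cycle.

Definition coord0 (i : nat) : bool := i %% 4 == 0.
Definition coord2 (k i : nat) : bool := (i %% 4 == 2) || ((k %% 4 == 2) && (i == k.-1)).

Definition coords0 k : {set 'I_k} := [set i : 'I_k | coord0 i].
Definition coords2 k : {set 'I_k} := [set i : 'I_k | coord2 k i].
Definition torus_dom_set m n : {set 'I_m * 'I_n} :=
  setX (coords0 m) (coords0 n) :|: setX (coords2 m) (coords2 n).

Lemma card_le_ceil_div4 k (A : {set 'I_k}) :
  {in A &, forall i j : 'I_k, i %/ 4 = j %/ 4 -> i = j :> nat} -> #|A| <= ceil_div k 4.
Proof.
move=> quarter_inj.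
have quarter_lt (i : 'I_k) : i %/ 4 < ceil_div k 4 by have := ltn_ord i; rewrite /ceil_div; lia.
rewrite -[ceil_div k 4]card_ord; apply: (@leq_card_in _ _ (fun i => Ordinal (quarter_lt i))).
by move=> i j iA jA [] /(quarter_inj i j iA jA) /val_inj.
Qed.

Lemma card_coords0 k : #|coords0 k| <= ceil_div k 4.
Proof. by apply: card_le_ceil_div4 => i j; rewrite !inE /coord0; lia. Qed.

Lemma card_coords2 k : #|coords2 k| <= ceil_div k 4.
Proof.
by apply: card_le_ceil_div4 => i j; have := ltn_ord i; have := ltn_ord j; rewrite !inE /coord2; lia.
Qed.

Lemma card_torus_dom_set m n : #|torus_dom_set m n| <= 2 * ceil_div m 4 * ceil_div n 4.
Proof.
apply: leq_trans (leq_card_setU _ _) _; rewrite !cardsX -mulnA mul2n -addnn.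
by apply: leq_add; apply: leq_mul; rewrite ?card_coords0 ?card_coords2.
Qed.

Definition window k (i : 'I_k) : seq (bool * bool) :=
  [seq (coord0 j, coord2 k j) | j : 'I_k <- ball2 i].

Lemma coords_congr a b z z' :
    a = b %[mod 4] -> z = z' %[mod 4] -> (z == a.-1) = (z' == b.-1) ->
  (coord0 z, coord2 a z) = (coord0 z', coord2 b z').
Proof. by move=> ab zz' z_last; rewrite /coord0 /coord2 zz' ab z_last. Qed.

Lemma window_eq a b (i : 'I_a) (j : 'I_b) :
    2 < a -> 2 < b -> a = b %[mod 4] -> i = j %[mod 4] ->
    minn i 2 = minn j 2 -> minn (a - i) 4 = minn (b - j) 4 ->
  window i = window j.
Proof.
move=> a_gt2 b_gt2 ab ij i_lo i_hi; have := ltn_ord i; have := ltn_ord j => j_lt i_lt.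
have j0 : (j == 0 :> nat) = (i == 0 :> nat) by lia.
have j1 : (j == 1 :> nat) = (i == 1 :> nat) by lia.
have j_last : (j == b.-1 :> nat) = (i == a.-1 :> nat) by lia.
have j_last2 : (j == b.-2 :> nat) = (i == a.-2 :> nat) by lia.
rewrite /window /ball2; cbn [map]; congr [:: _; _; _; _; _]; apply: coords_congr => //;
  rewrite ?val_ordS2 ?val_ord_pred2 ?val_ordS ?val_ord_pred ?j0 ?j1 ?j_last ?j_last2;
  clear j0 j1 j_last j_last2; case_nat_ifs; lia.
Qed.

Lemma window_model k (i : 'I_k) : 5 <= k -> exists i' : 'I_(12 + k %% 4), window i' = window i.
Proof.
move=> k_ge5; have := ltn_ord i => i_lt.
have [i' [i'_lt i_mod i_lo i_hi]] : exists i' : nat, [/\ i' < 12 + k %% 4, i' = i %[mod 4],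
    minn i' 2 = minn i 2 & minn (12 + k %% 4 - i') 4 = minn (k - i) 4].
  have [i_lt2|i_ge2] := ltnP i 2; first by exists i; split; lia.
  have [i_end|i_mid] := leqP (k - 3) i.
    by exists (i + (12 + k %% 4) - k); split; lia.
  by exists (2 + (i - 2) %% 4); split; lia.
by exists (Ordinal i'_lt); apply: window_eq => //=; lia.
Qed.

Definition window_mem (r c : seq (bool * bool)) (d : nat * nat) : bool :=
  let a := nth (false, false) r d.1 in let b := nth (false, false) c d.2 in
  (a.1 && b.1) || (a.2 && b.2).

(* Indices into [ball2]: 0 is the centre, 1 and 2 its neighbours, 3 and 4 the
   vertices at distance 2.  As index pairs, [offsets1] and [offsets2] list the
   neighbours and the vertices at distance 2 of a vertex of the torus. *)
Definition offsets1 := [:: (1, 0); (2, 0); (0, 1); (0, 2)].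
Definition offsets2 := [:: (3, 0); (4, 0); (0, 3); (0, 4); (1, 1); (1, 2); (2, 1); (2, 2)].

Definition windows_dominated (r c : seq (bool * bool)) : bool :=
  [|| window_mem r c (0, 0), has (window_mem r c) offsets1
    | 1 < count (window_mem r c) offsets2].

Lemma model_windows_dominated a b (x : 'I_(12 + a)) (y : 'I_(12 + b)) :
  a < 4 -> b < 4 -> windows_dominated (window x) (window y).
Proof.
have : all (fun a => all (fun b => all (fun i => all (fun j =>
    windows_dominated (window (@inZp (11 + a) i)) (window (@inZp (11 + b) j)))
  (iota 0 (12 + b))) (iota 0 (12 + a))) (iota 0 4)) (iota 0 4) by vm_compute.
move=> /allP /(_ a) + a_lt4 b_lt4; rewrite mem_iota => /(_ a_lt4) /allP /(_ b).
rewrite mem_iota => /(_ b_lt4) /allP /(_ x); rewrite mem_iota ltn_ord => /(_ isT) /allP /(_ y).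
by rewrite mem_iota ltn_ord !valZpK => /(_ isT).
Qed.

Lemma offsets1_lt5 d : d \in offsets1 -> (d.1 < 5) && (d.2 < 5).
Proof. by move: d; apply/allP. Qed.

Lemma offsets2_lt5 d : d \in offsets2 -> (d.1 < 5) && (d.2 < 5).
Proof. by move: d; apply/allP. Qed.

Section TorusDomination.
Variables m n : nat.
Hypotheses (m_ge5 : 5 <= m) (n_ge5 : 5 <= n).
Local Notation adj := (torus_adj m n).
Local Notation S := (torus_dom_set m n).

Definition ball_pt (v : 'I_m * 'I_n) (d : nat * nat) : 'I_m * 'I_n :=
  (nth v.1 (ball2 v.1) d.1, nth v.2 (ball2 v.2) d.2).

Lemma ball_pt0 v : ball_pt v (0, 0) = v.
Proof. by case: v. Qed.

Lemma ball_pt_mem v d : d.1 < 5 -> d.2 < 5 ->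
  (ball_pt v d \in S) = window_mem (window v.1) (window v.2) d.
Proof.
case: v d => x y [d1 d2] /= d1_lt d2_lt.
by rewrite /window_mem /window (nth_map x) ?(nth_map y) //= !inE.
Qed.

Lemma ball_pt_nbhd1 v d : d \in offsets1 -> ball_pt v d \in nbhd1 adj v.
Proof.
case: v => x y; rewrite /torus_adj nbhd1_cart !nbhd1_cycle !inE.
by case/or4P => /eqP -> /=; rewrite !eqxx ?orbT.
Qed.

Lemma ball_pt_nbhd2 v d : d \in offsets2 -> ball_pt v d \in nbhd2 adj v.
Proof.
case: v => x y; rewrite /torus_adj /offsets2 !in_cons in_nil orbF.
move=> /or4P [| | | /or4P [| | | /orP []]] /eqP ->; cbn [ball_pt ball2 nth fst snd];
  first [apply: nbhd2_cart_l | apply: nbhd2_cart_r | apply: nbhd2_cart_diag];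
  rewrite ?nbhd2_cycle ?cycle_adjE ?ordS_neq ?ord_pred_neq ?inE ?eqxx ?orbT //; lia.
Qed.

Lemma uniq_ball_pts v : uniq (map (ball_pt v) offsets2).
Proof.
case: v => x y; rewrite map_inj_in_uniq // => -[d1 d2] [e1 e2] d_in e_in [].
have /andP [d1_lt d2_lt] := offsets2_lt5 d_in; have /andP [e1_lt e2_lt] := offsets2_lt5 e_in.
move=> /eqP eq1 /eqP eq2; rewrite !nth_uniq ?uniq_ball2 // in eq1 eq2.
by rewrite (eqP eq1) (eqP eq2).
Qed.

Lemma torus_dom_set_dominates_at v : windows_dominated (window v.1) (window v.2) ->
  (v \notin S) ==> (0 < #|nbhd1 adj v :&: S|) || (1 < #|nbhd2 adj v :&: S|).
Proof.
move=> /or3P [v_in | /hasP [d d_in d_mem] | two_mem]; apply/implyP => v_notin.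
- by rewrite -ball_pt_mem // ball_pt0 (negbTE v_notin) in v_in.
- have /andP [d1_lt d2_lt] := offsets1_lt5 d_in.
  apply/orP; left; apply/card_gt0P; exists (ball_pt v d).
  by rewrite inE ball_pt_nbhd1 // ball_pt_mem.
- apply/orP; right; apply: leq_trans two_mem _.
  have -> : count (window_mem (window v.1) (window v.2)) offsets2 =
            count (mem S) (map (ball_pt v) offsets2).
    rewrite count_map; apply: eq_in_count => d d_in /=.
    by have /andP [d1_lt d2_lt] := offsets2_lt5 d_in; rewrite ball_pt_mem.
  rewrite -size_filter -(card_uniqP (filter_uniq _ (uniq_ball_pts v))).
  apply/subset_leq_card/subsetP => u; rewrite mem_filter => /andP [uS /mapP [d d_in u_eq]].
  by subst u; rewrite inE ball_pt_nbhd2.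
Qed.

Lemma torus_dom_set_dominating : disjunctive_dominating adj S.
Proof.
apply/forallP => v; apply: torus_dom_set_dominates_at.
have [x' <-] := window_model v.1 m_ge5; have [y' <-] := window_model v.2 n_ge5.
by apply: model_windows_dominated; rewrite ltn_pmod.
Qed.

End TorusDomination.

Lemma torus_gamma2d_ge m n : m * n <= 9 * gamma2d _ (torus_adj m n).
Proof.
have card_nbhd1 v : #|nbhd1 (torus_adj m n) v| <= 4.
  case: v => x y; apply: leq_trans (card_nbhd1_cart _ _ x y) _.
  exact: leq_add (card_nbhd1_cycle x) (card_nbhd1_cycle y).
have card_nbhd2 v : #|nbhd2 (torus_adj m n) v| <= 8.
  case: v => x y; apply: leq_trans (card_nbhd2_cart _ _ x y) _.
  exact: leq_add (leq_add (card_nbhd2_cycle x) (card_nbhd2_cycle y))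
                 (leq_mul (card_nbhd1_cycle x) (card_nbhd1_cycle y)).
have := gamma2d_ge (cart_adj_sym (@cycle_adj_sym m) (@cycle_adj_sym n)) card_nbhd1 card_nbhd2.
rewrite card_prod !card_ord /torus_adj; lia.
Qed.

Theorem theorem1 (m n : nat) (hm : 5 <= m) (hn : 5 <= n) :
  m * n <= 9 * gamma2d _ (torus_adj m n) /\
  gamma2d _ (torus_adj m n) <= 2 * ceil_div m 4 * ceil_div n 4.
Proof.
split; first exact: torus_gamma2d_ge.
exact: leq_trans (gamma2d_le (torus_dom_set_dominating hm hn)) (card_torus_dom_set m n).
Qed.
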